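(* Let $\mathbb{F}$ be a field, $n \ge 1$ an integer, and $I$ a non-trivial ideal of $\mathbb{F}[X_1,\ldots,X_n]$ such that the quotient space $\mathbb{F}[X_1,\ldots,X_n]/I$ has finite dimension $K$ over $\mathbb{F}$. Let $G(I)$ be the reduced Gröbner basis of $I$ with respect to the graded lexicographic order. Then $$|G(I)| \le (n-1)K + 1,$$ and equality holds if and only if $K = 1$ or $n = 1$.
   Context: The graded lexicographic order compares monomials first by total degree and then lexicographically (with $X_1 > X_2 > \cdots > X_n$). A Gröbner basis of a non-zero ideal $I$ with respect to a monomial order is a finite generating set $G$ of $I$ such that the leading monomial of every $f \in I$ is divisible by the leading monomial of some element of $G$; it is reduced if each element is monic and no leading monomial of an element divides any non-zero term of another element. Each non-zero ideal has a unique reduced Gröbner basis for a given monomial order. *)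

From HB Require Import structures.
From mathcomp Require Import all_boot all_order all_algebra.
From mathcomp Require Import mpoly.

Set Implicit Arguments.
Unset Strict Implicit.
Unset Printing Implicit Defensive.

Import Order.TTheory GRing.Theory.
Local Open Scope ring_scope.

(* Variables: X_1,...,X_n are 'X_0,...,'X_(n-1) (indices in 'I_n).
   Monomial order: the canonical total order (<= )%O on 'X_{1..n} from
   mpoly.v is  mnmc_le m1 m2 := (mdeg m1 :: m1 <= mdeg m2 :: m2)  in the
   lexicographic order on sequences, i.e. first by total degree, then
   lexicographically with X_1 > X_2 > ... > X_n: this is exactly the graded
   lexicographic order (see [grlex_ltP] below).  [mlead p] is the maximum of
   the support of p for this order, i.e. the grlex leading monomial. *)

Lemma grlex_ltP (n : nat) (m1 m2 : 'X_{1..n}) :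
  mdeg m1 = mdeg m2 ->
  reflect (exists2 i : 'I_n, (forall j : 'I_n, (j < i)%N -> m1 j = m2 j)
                             & (m1 i < m2 i)%N)
          (m1 < m2)%O.
Proof. exact: ltmcP. Qed.

Lemma grlex_lt_mdeg (n : nat) (m1 m2 : 'X_{1..n}) :
  (mdeg m1 < mdeg m2)%N -> (m1 < m2)%O.
Proof. exact: lt_mdeg_ltmc. Qed.

Definition is_ideal (F : fieldType) (n : nat) (I : {mpoly F[n]} -> Prop) :=
  [/\ I 0,
      (forall p q, I p -> I q -> I (p + q)) &
      (forall p q, I p -> I (q * p))].

Definition quot_dim (F : fieldType) (n : nat) (I : {mpoly F[n]} -> Prop)
    (K : nat) :=
  exists b : 'I_K -> {mpoly F[n]},
    (forall c : 'I_K -> F, I (\sum_(i < K) c i *: b i) -> forall i, c i = 0)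
    /\ (forall p, exists c : 'I_K -> F, I (p - \sum_(i < K) c i *: b i)).

Definition groebner_basis (F : fieldType) (n : nat) (I : {mpoly F[n]} -> Prop)
    (G : seq {mpoly F[n]}) :=
  [/\ uniq G,
      (forall p, I p <-> exists q : {mpoly F[n]} -> {mpoly F[n]},
                            p = \sum_(g <- G) q g * g) &
      (forall f, I f -> f != 0 ->
         exists2 g, g \in G & (mlead g <= mlead f)%MM)].

Definition reduced_groebner_basis (F : fieldType) (n : nat)
    (I : {mpoly F[n]} -> Prop) (G : seq {mpoly F[n]}) :=
  [/\ groebner_basis I G,
      (forall g, g \in G -> mleadc g = 1) &
      (forall g g', g \in G -> g' \in G -> g != g' ->
         forall m, m \in msupp g' -> ~~ (mlead g <= m)%MM)].

From HB Require Import structures.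
From mathcomp Require Import all_boot all_order all_algebra.
From mathcomp Require Import mpoly zify.

(* Let A be the set of leading monomials of G: an antichain for divisibility
   not containing 1.  The standard monomials (those divisible by no element of
   A) are linearly independent modulo I, so there are at most K of them.
   At most one element of A is a pure power of X_1; any other a in A is
   divisible by some X_i with i <> 1, and a |-> (a / X_i, i) is injective with
   a / X_i standard, because A is an antichain.  Hence |A| <= 1 + (n - 1) K.
   When n, K > 1 some standard t differs from 1, and one of the pairs (t, X_2),
   (1, X_2) is not reached, so the bound is strict.  When K = 1 the only
   standard monomial is 1, which forces A = {X_1, ..., X_n}. *)

Set Implicit Arguments.
Unset Strict Implicit.
Unset Printing Implicit Defensive.

Import Order.TTheory GRing.Theory.

Section Monomials.
Variable n : nat.
Implicit Types (m a : 'X_{1..n}) (A : seq 'X_{1..n}).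

Lemma lem_anti m1 m2 : (m1 <= m2)%MM -> (m2 <= m1)%MM -> m1 = m2.
Proof. by move=> le12 le21; apply/le_anti; rewrite !lem_leo. Qed.

Lemma lem0 m : (m <= 0)%MM = (m == 0%MM).
Proof.
apply/idP/eqP => [le_m0|->]; last exact: lepm_refl.
by apply: lem_anti le_m0 _; apply/mnm_lepP => i; rewrite mnm0E.
Qed.

Lemma mnm_neq0_lep1m m : m != 0%MM -> exists i, (U_(i) <= m)%MM.
Proof.
move=> m_neq0; apply/existsP; apply: contraNT m_neq0.
rewrite negb_exists => /forallP m_eq0; apply/eqP/mnmP => i.
by rewrite mnm0E; apply/eqP; rewrite -[_ == _]negbK -lep1mP m_eq0.
Qed.

Lemma lep1m1 (i j : 'I_n) : (U_(i) <= U_(j))%MM = (i == j).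
Proof.
apply/idP/eqP => [/mnm_lepP/(_ i)|->]; last exact: lepm_refl.
by rewrite !mnm1E eqxx; case: eqP.
Qed.

Definition standard A m := all (fun a => ~~ (a <= m)%MM) A.

End Monomials.

Section Antichain.
Variables (n : nat) (A : seq 'X_{1..n}) (k : nat) (i0 : 'I_n).
Implicit Types (a : 'X_{1..n}) (i : 'I_n).
Hypotheses (A_uniq : uniq A) (A_neq0 : 0%MM \notin A).
Hypothesis A_antichain : {in A &, forall a a', (a <= a')%MM -> a = a'}.
Hypothesis standard_bound :
  forall s, uniq s -> all (standard A) s -> (size s <= k)%N.

Lemma antichain_lep1m a : a \in A -> exists i, (U_(i) <= a)%MM.
Proof. by move=> aA; apply: mnm_neq0_lep1m; apply: contraNneq A_neq0 => <-. Qed.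

Lemma standard0 : standard A 0%MM.
Proof. by apply/allP => a aA; rewrite lem0; apply: contraNneq A_neq0 => <-. Qed.

Lemma standard_bound_gt0 : (0 < k)%N.
Proof. by apply: (standard_bound (s := [:: 0%MM])) => //=; rewrite standard0. Qed.

Lemma standard_subm1 a i : a \in A -> (U_(i) <= a)%MM -> standard A (a - U_(i)).
Proof.
move=> aA Uia; apply/allP => a' a'A; apply/negP => le_a'.
have a'a := A_antichain a'A aA (lepm_trans le_a' (lem_subr _ _)); subst a'.
move: le_a' => /mnm_lepP/(_ i); rewrite mnmBE mnm1E eqxx.
by move: Uia; rewrite lep1mP -lt0n; lia.
Qed.

Definition off_var a := [pick i | (i != i0) && (a i != 0%N)].

Lemma off_var_Some a i : off_var a = Some i -> i != i0 /\ (U_(i) <= a)%MM.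
Proof. by rewrite /off_var lep1mP; case: pickP => // j /andP[? ?] [<-]. Qed.

Lemma off_var_None a j : off_var a = None -> j != i0 -> a j = 0%N.
Proof.
by rewrite /off_var; case: pickP => // /(_ j) + _ ne; rewrite ne => /negbFE/eqP.
Qed.

Definition var_shift a :=
  if off_var a is Some i then ((a - U_(i))%MM, i) else (a, i0).

Let A0 := [seq a <- A | off_var a == None].
Let A1 := [seq a <- A | off_var a != None].
(* The unit monomial is put in T so that [var_shift_miss] can use (0, i1). *)
Let T := undup (0%MM :: [seq (var_shift a).1 | a <- A1]).
Let J := rem i0 (enum 'I_n).

Lemma size_A0 : (size A0 <= 1)%N.
Proof.
have A0P a : a \in A0 -> a \in A /\ forall j, j != i0 -> a j = 0%N.
  by rewrite mem_filter => /andP[/eqP/off_var_None ? ?].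
have le_A0 a a' : a \in A0 -> a' \in A0 -> (a i0 <= a' i0)%N -> a = a'.
  move=> /A0P[aA a0] /A0P[a'A a'0] le_i0; apply: A_antichain => //.
  by apply/mnm_lepP => j; case: (eqVneq j i0) => [->//|ne]; rewrite a0.
have A0_eq : {in A0 &, forall a a', a = a'}.
  move=> a a' aA0 a'A0; case: (leqP (a i0) (a' i0)) => [|/ltnW] le.
    exact: le_A0.
  exact/esym/le_A0.
case A0E: A0 (filter_uniq _ A_uniq : uniq A0) => [|a [|a' s]] //= /andP[+ _].
by rewrite (A0_eq a a') ?A0E ?inE ?eqxx ?orbT.
Qed.

Lemma size_A : size A = (size A0 + size A1)%N.
Proof.
rewrite addnC !size_filter -(count_predC (fun a => off_var a != None)).
by congr (_ + _)%N; apply: eq_count => a /=; rewrite negbK.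
Qed.

Lemma size_J : size J = (n - 1)%N.
Proof. by rewrite size_rem ?mem_enum // size_enum_ord subn1. Qed.

Lemma mem_J i : (i \in J) = (i != i0).
Proof. by rewrite mem_rem_uniq ?enum_uniq // inE mem_enum andbT. Qed.

Lemma var_shiftK a : a \in A1 -> ((var_shift a).1 + U_((var_shift a).2))%MM = a.
Proof.
rewrite mem_filter /var_shift; case ha: (off_var a) => [i|] //= _.
by rewrite submK //; case: (off_var_Some ha).
Qed.

Lemma size_T : (size T <= k)%N.
Proof.
apply: standard_bound; first exact: undup_uniq.
apply/allP => t; rewrite mem_undup inE => /predU1P[->|]; first exact: standard0.
case/mapP => a; rewrite mem_filter /var_shift => /andP[+ aA] ->.
case ha: (off_var a) => [i|] //= _.
by apply: standard_subm1 => //; case: (off_var_Some ha).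
Qed.

Let P := [seq (t, i) | t <- T, i <- J].

Lemma size_P : size P = (size T * (n - 1))%N.
Proof. by rewrite size_allpairs size_J. Qed.

Lemma uniq_P : uniq P.
Proof.
apply: allpairs_uniq; [exact: undup_uniq | exact: rem_uniq (enum_uniq _) |].
by move=> [? ?] [? ?] _ _ /= [-> ->].
Qed.

Lemma uniq_var_shift : uniq (map var_shift A1).
Proof.
rewrite map_inj_in_uniq ?filter_uniq // => a a' aA1 a'A1 eq_shift.
by rewrite -(var_shiftK aA1) -(var_shiftK a'A1) eq_shift.
Qed.

Lemma var_shift_sub : {subset map var_shift A1 <= P}.
Proof.
move=> _ /mapP[a aA1 ->]; have T_shift : (var_shift a).1 \in T.
  by rewrite mem_undup inE (map_f (fun a => (var_shift a).1)) ?orbT.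
move: aA1 T_shift; rewrite mem_filter /var_shift.
case ha: (off_var a) => [i|] //= _ Ta; apply: allpairs_f => //.
by rewrite mem_J; case: (off_var_Some ha).
Qed.

Lemma size_A1 : (size A1 <= size T * (n - 1))%N.
Proof.
rewrite -size_P -(size_map var_shift).
exact: uniq_leq_size uniq_var_shift var_shift_sub.
Qed.

Theorem size_antichain_le : (size A <= (n - 1) * k + 1)%N.
Proof.
have := leq_mul size_T (leqnn (n - 1)); have := size_A0; have := size_A1.
rewrite size_A; lia.
Qed.

Lemma var_shift_miss t i1 : t \in T -> t != 0%MM -> i1 != i0 ->
  exists2 q, q \in P & q \notin map var_shift A1.
Proof.
move=> tT t_neq0 i1_neq0.
exists (if U_(i1)%MM \in A then t else 0%MM, i1).
  apply: allpairs_f; last by rewrite mem_J.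
  by case: ifP; rewrite // mem_undup mem_head.
apply/mapP => -[a aA1 /esym eq_shift]; have := var_shiftK aA1.
rewrite eq_shift /=; move: aA1; rewrite mem_filter => /andP[_ aA].
case: ifP => [UA|UnA] a_eq; last by move: UnA; rewrite -[U_(i1)%MM]add0m a_eq aA.
have a_U : a = U_(i1)%MM by apply/esym/A_antichain; rewrite // -a_eq lem_addl.
have : (t + U_(i1) = 0 + U_(i1))%MM by rewrite a_eq a_U add0m.
by move/addIm/eqP; rewrite (negbTE t_neq0).
Qed.

Lemma size_A1_lt t i1 : t \in T -> t != 0%MM -> i1 != i0 ->
  (size A1 < size T * (n - 1))%N.
Proof.
move=> tT t_neq0 i1_neq0.
have [q qP q_miss] := var_shift_miss tT t_neq0 i1_neq0.
have sub_rem : {subset map var_shift A1 <= rem q P}.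
  move=> x x_shift; rewrite mem_rem_uniq ?uniq_P // inE var_shift_sub ?andbT //.
  by apply: contraNneq q_miss => <-.
have := uniq_leq_size uniq_var_shift sub_rem.
have P_gt0 : (0 < size P)%N by case: (P) qP.
rewrite size_map size_rem // -size_P => A1_le.
by rewrite -(prednK P_gt0) ltnS.
Qed.

Theorem size_antichain_lt :
  (1 < n)%N -> (1 < k)%N -> (size A < (n - 1) * k + 1)%N.
Proof.
move=> n_gt1 k_gt1; have [i1 i1J] : exists i1, i1 \in J.
  by case: J size_J => [|i ?] /=; [lia | exists i; rewrite mem_head].
rewrite mem_J in i1J; rewrite size_A.
have := leq_mul size_T (leqnn (n - 1)); have := size_A0.
case: (boolP (has (fun t => t != 0%MM) T)) => [/hasP[t tT t_neq0]|/hasPn T0].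
  by have := size_A1_lt tT t_neq0 i1J; lia.
have : (size T <= 1)%N.
  apply: (uniq_leq_size (s2 := [:: 0%MM])) => [|t /T0]; first exact: undup_uniq.
  by rewrite negbK inE.
by have := size_A1; nia.
Qed.

Section OneStandard.
Hypothesis k_le1 : (k <= 1)%N.

Lemma standard_eq0 m : standard A m -> m = 0%MM.
Proof.
move=> std_m; apply/eqP; apply: contraTT k_le1 => m_neq0; rewrite -ltnNge.
apply: (standard_bound (s := [:: 0%MM; m])) => /=.
  by rewrite inE eq_sym m_neq0.
by rewrite standard0 std_m.
Qed.

Lemma mnm1_in_antichain i : U_(i)%MM \in A.
Proof.
have /allPn[a aA /negbNE le_a] : ~~ standard A U_(i).
  by apply/negP => /standard_eq0/eqP; rewrite mnm1_eq0.
have [j Uj_a] := antichain_lep1m aA.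
move: (lepm_trans Uj_a le_a); rewrite lep1m1 => /eqP ji; subst j.
by rewrite (lem_anti Uj_a le_a).
Qed.

Theorem size_antichain_vars : size A = n.
Proof.
suff /perm_size -> : perm_eq A [seq U_(i)%MM | i <- enum 'I_n].
  by rewrite size_map size_enum_ord.
apply: uniq_perm => //.
  by rewrite map_inj_uniq ?enum_uniq // => i j /eqP; rewrite eq_mnm1 => /eqP.
move=> a; apply/idP/mapP => [aA|[i _ ->]]; last exact: mnm1_in_antichain.
have [i Ui_a] := antichain_lep1m aA.
by exists i; rewrite ?mem_enum // (A_antichain (mnm1_in_antichain i) aA Ui_a).
Qed.

End OneStandard.

End Antichain.

Local Open Scope ring_scope.

Section MonomialCombination.
Variables (R : nzRingType) (n : nat) (s : seq 'X_{1..n}) (c : 'I_(size s) -> R).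

Let p : {mpoly R[n]} := \sum_(j < size s) c j *: 'X_[nth 0%MM s j].

Lemma msupp_sum_monomials : {subset msupp p <= s}.
Proof.
move=> m /msupp_sum_le /flattenP[_ /mapP[j _ ->]] /msuppZ_le.
by rewrite msuppX inE => /eqP ->; rewrite mem_nth.
Qed.

Lemma mcoeff_sum_monomials (j : 'I_(size s)) : uniq s -> p@_(nth 0%MM s j) = c j.
Proof.
move=> s_uniq; rewrite /p raddf_sum (bigD1 j) //= mcoeffZ mcoeffX eqxx mulr1.
rewrite big1 ?addr0 // => k k_neq_j.
by rewrite mcoeffZ mcoeffX nth_uniq // (inj_eq val_inj) (negbTE k_neq_j) mulr0.
Qed.

End MonomialCombination.

Section Ideal.
Variables (F : fieldType) (n : nat) (I : {mpoly F[n]} -> Prop).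
Hypothesis I_ideal : is_ideal I.

Lemma ideal_sum (T : Type) (r : seq T) (f : T -> {mpoly F[n]}) :
  (forall x, I (f x)) -> I (\sum_(x <- r) f x).
Proof.
case: I_ideal => I0 ID _ If; elim: r => [|x r IHr]; first by rewrite big_nil.
by rewrite big_cons; apply: ID.
Qed.

Lemma idealZ c p : I p -> I (c *: p).
Proof. by case: I_ideal => _ _ IM Ip; rewrite -mul_mpolyC; apply: IM. Qed.

Lemma ideal_dependent K N (b : 'I_K -> {mpoly F[n]}) (f : 'I_N -> {mpoly F[n]}) :
  (forall p, exists c : 'I_K -> F, I (p - \sum_(i < K) c i *: b i)) ->
  (K < N)%N ->
  exists c : 'I_N -> F, (exists j, c j != 0) /\ I (\sum_(j < N) c j *: f j).
Proof.
move=> b_span K_lt_N; have /fin_all_exists[C IC] := fun j => b_span (f j).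
have : kermx (\matrix_(j, i) C j i) != 0.
  rewrite -mxrank_eq0 mxrank_ker subn_eq0 -ltnNge.
  exact: leq_ltn_trans (rank_leq_col _) K_lt_N.
case/rowV0Pn => d /sub_kermxP dC d_neq0; exists (d 0); split.
  apply/existsP; apply: contraNT d_neq0 => /existsPn d0.
  by apply/eqP/rowP => j; rewrite mxE; apply/eqP/negbNE/d0.
have dC0 i : \sum_(j < N) d 0 j * C j i = 0.
  have := congr1 (fun M : 'M_(1, K) => M 0 i) dC; rewrite !mxE => dCi.
  by rewrite -[RHS]dCi; apply: eq_bigr => j _; rewrite mxE.
have combC0 : \sum_(j < N) d 0 j *: \sum_(i < K) C j i *: b i = 0.
  under eq_bigr do rewrite scaler_sumr; rewrite exchange_big big1 // => i _ /=.
  by under eq_bigr do rewrite scalerA; rewrite -scaler_suml dC0 scale0r.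
have -> : \sum_(j < N) d 0 j *: f j =
          \sum_(j < N) d 0 j *: (f j - \sum_(i < K) C j i *: b i).
  by under [RHS]eq_bigr do rewrite scalerBr; rewrite sumrB combC0 subr0.
by apply: ideal_sum => j; apply: idealZ.
Qed.

Lemma standard_size_le K (A s : seq 'X_{1..n}) :
  quot_dim I K ->
  (forall f, I f -> f != 0 -> ~~ standard A (mlead f)) ->
  uniq s -> all (standard A) s -> (size s <= K)%N.
Proof.
move=> [b [_ b_span]] lead_nonstd s_uniq s_std.
rewrite leqNgt; apply/negP => K_lt_s.
have [c [[j cj_neq0] Ip]] :=
  ideal_dependent (fun j : 'I_(size s) => 'X_[nth 0%MM s j]) b_span K_lt_s.
set p := \sum_(j < size s) _ in Ip.
have p_neq0 : p != 0.
  apply: contra_neq cj_neq0 => p0.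
  by rewrite -(mcoeff_sum_monomials c j s_uniq) -/p p0 mcoeff0.
have /msupp_sum_monomials/(allP s_std) := mlead_supp p_neq0.
by apply/negP/lead_nonstd.
Qed.

End Ideal.

Section ReducedGroebnerBasis.
Variables (F : fieldType) (n : nat) (I : {mpoly F[n]} -> Prop).
Variable G : seq {mpoly F[n]}.

Lemma groebner_mlead_nonstandard f : groebner_basis I G ->
  I f -> f != 0 -> ~~ standard ([seq mlead g | g <- G]) (mlead f).
Proof.
case=> _ _ G_lead If f_neq0; have [g gG le_g] := G_lead f If f_neq0.
by apply/allPn; exists (mlead g); rewrite ?map_f ?negbK.
Qed.

Lemma size_groebner_gt0 : groebner_basis I G ->
  (exists p, I p /\ p != 0) -> (0 < size G)%N.
Proof.
case=> _ _ G_lead [p [Ip p_neq0]]; have [g gG _] := G_lead p Ip p_neq0.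
by case: (G) gG.
Qed.

Hypothesis I_proper : ~ I 1.
Hypothesis G_reduced : reduced_groebner_basis I G.

Lemma reduced_groebner_neq0 g : g \in G -> g != 0.
Proof.
case: G_reduced => _ G_monic _ gG; apply: contra_eq_neq (G_monic g gG) => ->.
by rewrite mleadc0 eq_sym oner_neq0.
Qed.

Lemma reduced_groebner_mem g : g \in G -> I g.
Proof.
case: G_reduced => -[G_uniq G_gen _] _ _ gG; apply/G_gen.
exists (fun h => (h == g)%:R); rewrite (bigD1_seq g) //= eqxx mul1r.
rewrite big1 ?addr0 //.
by move=> h /negbTE ->; rewrite mul0r.
Qed.

Lemma reduced_groebner_antichain :
  {in [seq mlead g | g <- G] &, forall a a', (a <= a')%MM -> a = a'}.
Proof.
case: G_reduced => _ _ G_red _ _ /mapP[g gG ->] /mapP[g' g'G ->] le_g.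
case: (eqVneq g g') => [->//|g_neq_g'].
have := G_red g g' gG g'G g_neq_g' _ (mlead_supp (reduced_groebner_neq0 g'G)).
by rewrite le_g.
Qed.

Lemma uniq_reduced_groebner_mlead : uniq ([seq mlead g | g <- G]).
Proof.
case: G_reduced => -[G_uniq _ _] _ G_red.
rewrite map_inj_in_uniq // => g g' gG g'G eq_lead.
apply/eqP; apply: contraT => g_neq_g'.
have := G_red g g' gG g'G g_neq_g' _ (mlead_supp (reduced_groebner_neq0 g'G)).
by rewrite eq_lead lepm_refl.
Qed.

Lemma reduced_groebner_mlead_neq0 : 0%MM \notin [seq mlead g | g <- G].
Proof.
apply/mapP => -[g gG /esym lead0]; apply: I_proper.
have g_neq0 := reduced_groebner_neq0 gG.
suff <- : g = 1 by exact: reduced_groebner_mem.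
case: G_reduced => _ G_monic _.
rewrite (@msize1_polyC _ _ g); last by rewrite -mlead_deg // lead0 mdeg0.
by rewrite -lead0 G_monic.
Qed.

End ReducedGroebnerBasis.

Theorem mainTheorem2 (F : fieldType) (n : nat) (I : {mpoly F[n]} -> Prop)
    (K : nat) (G : seq {mpoly F[n]}) :
  (1 <= n)%N ->
  is_ideal I ->
  ~ I (1%R : {mpoly F[n]}) ->
  (exists p, I p /\ p != 0%R :> {mpoly F[n]}) ->
  quot_dim I K ->
  reduced_groebner_basis I G ->
  (size G <= (n - 1) * K + 1)%N /\
  (size G = ((n - 1) * K + 1)%N <-> K = 1%N \/ n = 1%N).
Proof.
move=> n_gt0 I_ideal I_proper I_neq0 I_dim G_reduced.
have G_groebner : groebner_basis I G by case: G_reduced.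
have G_gt0 := size_groebner_gt0 G_groebner I_neq0.
have A_bound := standard_size_le I_ideal I_dim
  (fun f => groebner_mlead_nonstandard (f := f) G_groebner).
have A_neq0 := reduced_groebner_mlead_neq0 I_proper G_reduced.
have A_anti := reduced_groebner_antichain G_reduced.
have A_uniq := uniq_reduced_groebner_mlead G_reduced.
have size_A : size [seq mlead g | g <- G] = size G by rewrite size_map.
set A := [seq mlead g | g <- G] in A_bound A_neq0 A_anti A_uniq size_A.
rewrite -size_A in G_gt0 *.
pose i0 : 'I_n := Ordinal n_gt0.
have K_gt0 := standard_bound_gt0 A_neq0 A_bound.
split; first exact: size_antichain_le i0 A_uniq A_neq0 A_anti A_bound.
split=> [A_eq|[K1|n1]].
- have [K_gt1|] := ltnP 1 K; last by left; lia.
  have [n_gt1|] := ltnP 1 n; last by right; lia.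
  by have := size_antichain_lt i0 A_uniq A_neq0 A_anti A_bound n_gt1 K_gt1; lia.
- have := size_antichain_vars A_uniq A_neq0 A_anti A_bound (eq_leq K1); nia.
- have := size_antichain_le i0 A_uniq A_neq0 A_anti A_bound; nia.
Qed.
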